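(* For every single-use two-way automaton there is a number $N\in\mathbb N$ such that for every string $u$ over $\Sigma+\{\vdash,\dashv\}$, the Shepherdson profile of $u$ is supported by a tuple of at most $N$ atoms.
   Context: Atoms, atom automorphisms, polynomial orbit-finite sets, supports (an element $x$ is supported by $\bar a\in\mathbb A^*$ if every atom automorphism fixing $\bar a$ pointwise fixes $x$; automorphisms act on functions by $\pi(f)=\pi\circ f\circ\pi^{-1}$) and single-use two-way automata are as follows. Fix a countably infinite set $\mathbb A$ of atoms; a polynomial orbit-finite set is built from $\mathbb A$ and singletons by finite products and disjoint unions. A single-use two-way automaton has a polynomial orbit-finite input alphabet $\Sigma$, finitely many states $Q$, finitely many registers (say $k$) holding atoms or $\bot$, and a deterministic transition function assigning to each state a question and, for each answer, a next state and an action. Questions: apply an equivariant function $\Sigma+\{\vdash,\dashv\}\to\{\mathrm{yes},\mathrm{no}\}$ to the letter under the head; or test equality of the atoms in two registers (rejecting if one is $\bot$), after which both registers are set to $\bot$ (single-use restriction). Actions: store the value of an equivariant function $\Sigma+\{\vdash,\dashv\}\to\mathbb A+\bot$ of the current letter in a register; move the head left or right; accept or reject. The Shepherdson profile of $u$ is the function $Q\times(\mathbb A+\bot)^k\times\{\leftarrow,\rightarrow\}\to\{\mathrm{accept},\mathrm{loop}\}+Q\times(\mathbb A+\bot)^k\times\{\leftarrow,\rightarrow\}$ mapping $(q,\eta,d)$ to the outcome of running the automaton on $u$ from state $q$ with register valuation $\eta$, starting at the leftmost position of $u$ if $d$ says the run enters from the left and at the rightmost position otherwise, until the head leaves $u$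 (outcome: the state, register valuation and side on which it exits), or it accepts (outcome accept), or it rejects or runs forever (outcome loop). *)

From HB Require Import structures.
From mathcomp Require Import all_boot.
From Stdlib Require Import ClassicalEpsilon.
Set Implicit Arguments. Unset Strict Implicit. Unset Printing Implicit Defensive.

Definition atom := nat.

Record aut := Aut {
  aut_fun :> atom -> atom;
  aut_inv : atom -> atom;
  aut_funK : cancel aut_fun aut_inv;
  aut_invK : cancel aut_inv aut_fun }.

Definition aut_invA (pi : aut) : aut :=
  @Aut (aut_inv pi) (aut_fun pi) (aut_invK pi) (aut_funK pi).

Inductive pof := PAtom | PUnit | PProd of pof & pof | PSum of pof & pof.

Fixpoint el (p : pof) : Type :=
  match p with
  | PAtom => atom
  | PUnit => unit
  | PProd a b => (el a * el b)%type
  | PSum a b => (el a + el b)%type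
  end.

Fixpoint el_act (pi : atom -> atom) (p : pof) : el p -> el p :=
  match p return el p -> el p with
  | PAtom => fun x => pi x
  | PUnit => fun x => x
  | PProd a b => fun x => (el_act pi x.1, el_act pi x.2)
  | PSum a b => fun x => match x with
                         | inl y => inl (el_act pi y)
                         | inr z => inr (el_act pi z)
                         end
  end.

Inductive letter (S : pof) := Sym of el S | LEnd | REnd.
Arguments LEnd {S}. Arguments REnd {S}.

Definition letter_act (S : pof) (pi : atom -> atom) (l : letter S) : letter S :=
  match l with Sym x => Sym (el_act pi x) | LEnd => LEnd | REnd => REnd end.

Definition equivariant_bool (S : pof) (f : letter S -> bool) :=
  forall (pi : aut) l, f (letter_act pi l) = f l.
Definition equivariant_atom (S : pof) (g : letter S -> option atom) :=
  forall (pi : aut) l, g (letter_act pi l) = omap pi (g l).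

Inductive question (S : pof) (k : nat) :=
  | QLetter (f : letter S -> bool) of equivariant_bool f
  | QEq of 'I_k & 'I_k.

Inductive action (S : pof) (k : nat) :=
  | AStore (g : letter S -> option atom) of equivariant_atom g & 'I_k
  | ALeft | ARight | AAccept | AReject.
Arguments ALeft {S k}. Arguments ARight {S k}.
Arguments AAccept {S k}. Arguments AReject {S k}.

Record automaton (S : pof) := Automaton {
  state : finType;
  nregs : nat;
  quest : state -> question S nregs;
  trans : state -> bool -> state * action S nregs }.

Definition regs (k : nat) := {ffun 'I_k -> option atom}.

(* dir: on input, the side from which the head enters u;
   on output, the side on which the head leaves u. *)
Inductive dir := DLeft | DRight.

Inductive outcome (Q : Type) (k : nat) :=
  | OAccept | OLoop | OExit of Q & regs k & dir.
Arguments OAccept {Q k}. Arguments OLoop {Q k}.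

Section Run.
Variables (S : pof) (M : automaton S) (u : seq (letter S)).

Definition config := (state M * regs (nregs M) * nat)%type.
Definition out := outcome (state M) (nregs M).

Definition do_action (qa : state M * action S (nregs M)) (eta : regs (nregs M))
    (pos : nat) (l : letter S) : config + out :=
  let (q', a) := qa in
  match a with
  | AStore g _ i => inl (q', [ffun j => if j == i then g l else eta j], pos)
  | ALeft => if pos is p.+1 then inl (q', eta, p) else inr (OExit q' eta DLeft)
  | ARight => if pos.+1 < size u then inl (q', eta, pos.+1)
              else inr (OExit q' eta DRight)
  | AAccept => inr OAccept
  | AReject => inr OLoop
  end.

Definition step (c : config) : config + out :=
  let: (q, eta, pos) := c in
  let l := nth LEnd u pos in
  match quest q with
  | QLetter f _ => do_action (trans q (f l)) eta pos l
  | QEq i j =>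
      match eta i, eta j with
      | Some a, Some b =>
          let eta' := [ffun m => if (m == i) || (m == j) then None else eta m] in
          do_action (trans q (a == b)) eta' pos l
      | _, _ => inr OLoop   (* testing bot rejects *)
      end
  end.

Fixpoint run (n : nat) (c : config) : option out :=
  match n with
  | 0 => None
  | n.+1 => match step c with inl c' => run n c' | inr o => Some o end
  end.

Definition run_from (n : nat) (x : state M * regs (nregs M) * dir) : option out :=
  let: (q, eta, d) := x in
  if u is [::] then
    (* the empty string: the head passes straight through *)
    Some (OExit q eta (if d is DLeft then DRight else DLeft))
  else run n (q, eta, if d is DLeft then 0 else (size u).-1).

(* Shepherdson profile: accept / exit outcome if reached, loop otherwise
   (rejecting runs give OLoop via run itself). *)
Definition profile (x : state M * regs (nregs M) * dir) : out :=
  match excluded_middle_informative (exists o, exists n, run_from n x = Some o) with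
  | left H => proj1_sig (constructive_indefinite_description _ H)
  | right _ => OLoop
  end.

End Run.

Definition regs_act (k : nat) (pi : atom -> atom) (eta : regs k) : regs k :=
  [ffun i => omap pi (eta i)].

Definition in_act (Q : Type) (k : nat) (pi : atom -> atom) (x : Q * regs k * dir)
  : Q * regs k * dir :=
  let: (q, eta, d) := x in (q, regs_act pi eta, d).

Definition out_act (Q : Type) (k : nat) (pi : atom -> atom) (o : outcome Q k)
  : outcome Q k :=
  match o with
  | OExit q eta d => OExit q (regs_act pi eta) d
  | OAccept => OAccept
  | OLoop => OLoop
  end.

(* abar supports f : every automorphism fixing abar pointwise fixes f,
   where pi(f) = pi o f o pi^-1. *)
Definition supports (Q : Type) (k : nat) (abar : seq atom)
    (f : Q * regs k * dir -> outcome Q k) : Prop :=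
  forall pi : aut, (forall a, a \in abar -> pi a = a) ->
    forall x, out_act pi (f (in_act (aut_inv pi) x)) = f x.

From mathcomp Require Import all_boot.
From Stdlib Require Import ClassicalEpsilon.
Set Implicit Arguments. Unset Strict Implicit. Unset Printing Implicit Defensive.

(* Run the automaton on symbolic registers, each holding either an atom stored
   during the run or a reference to the initial content of some register;
   comparisons are still evaluated under the initial valuation eta.  Single use
   means a register loses its initial content as soon as it is compared, so
   each register is read at most once along a run.  Hence the symbolic run is
   determined by a signature (state, entry side, which registers are defined,
   and the at most k answers of comparisons reading initial contents) ranging
   over a finite set independent of u.  An automorphism fixing the atoms that
   these finitely many runs compare with initial contents, or leave in the exit
   registers, does not change the symbolic run, so these atoms support the
   profile. *)

Definition classic_bool (P : Prop) : bool :=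
  if excluded_middle_informative P then true else false.

Lemma classic_boolP (P : Prop) : reflect P (classic_bool P).
Proof. by rewrite /classic_bool; case: excluded_middle_informative => H; constructor. Qed.

Lemma epsilon_unique (A : Type) (i : inhabited A) (P : A -> Prop) a :
  P a -> (forall b c, P b -> P c -> b = c) -> epsilon i P = a.
Proof. by move=> Pa uniqP; apply: uniqP (Pa); apply: epsilon_spec; exists a. Qed.

Section Profile.
Variables (S : pof) (M : automaton S) (u : seq (letter S)).
Local Notation k := (nregs M).
Local Notation Q := (state M).

Lemma run_addn n m (c : config M) o : run u n c = Some o -> run u (n + m) c = Some o.
Proof. by elim: n c => //= n IH c; case: (step u c) => //; apply: IH. Qed.

Lemma run_from_unique n n' (x : Q * regs k * dir) o o' :
  run_from u n x = Some o -> run_from u n' x = Some o' -> o = o'.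
Proof.
case: x => [[q eta] d]; rewrite /run_from; case Hu: u => [|l u'] /=; first by move=> [<-] [<-].
rewrite -Hu.
wlog le_nn' : n n' o o' / n <= n' => [W Hn Hn'|].
  by case: (leqP n n') => [/W|/ltnW/W W']; [apply | symmetry; apply: W'].
by move=> Hn; rewrite -(subnKC le_nn') (run_addn _ Hn) => -[].
Qed.

Lemma profile_run_from_map (x x' : Q * regs k * dir) (F : out M -> out M) :
  (forall n, omap F (run_from u n x') = run_from u n x) -> F OLoop = OLoop ->
  F (profile u x') = profile u x.
Proof.
move=> runF FL; rewrite /profile.
case: excluded_middle_informative => [ex'|no']; case: excluded_middle_informative => [ex|no] //.
- case: constructive_indefinite_description => /= o' [n' Hn'].
  case: constructive_indefinite_description => /= o [n Hn].
  by apply: (run_from_unique (n := n')) Hn; rewrite -runF Hn'.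
- by case: no; case: ex' => o' [n' Hn']; exists (F o'), n'; rewrite -runF Hn'.
- case: no'; case: ex => o [n Hn]; move: (runF n); rewrite Hn.
  by case E: (run_from u n x') => [o'|] // _; exists o', n.
Qed.

(* [inl a] is the atom [a]; [inr t] is the initial content of register [t]. *)
Definition svalue := (atom + 'I_k)%type.
Definition sregs := {ffun 'I_k -> option svalue}.
Definition sconfig := (Q * sregs * nat)%type.
Inductive soutcome := SAccept | SLoop | SExit of Q & sregs & dir.

Definition svalue_interp (eta : regs k) (x : svalue) : option atom :=
  match x with inl a => Some a | inr t => eta t end.
Definition sregs_interp eta (s : sregs) : regs k :=
  [ffun t => obind (svalue_interp eta) (s t)].
Definition sconfig_interp eta (c : sconfig) : config M :=
  let: (q, s, pos) := c in (q, sregs_interp eta s, pos).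
Definition soutcome_interp eta (o : soutcome) : out M :=
  match o with
  | SAccept => OAccept
  | SLoop => OLoop
  | SExit q s d => OExit q (sregs_interp eta s) d
  end.
Definition sresult_interp eta (r : sconfig + soutcome) : config M + out M :=
  match r with
  | inl c => inl (sconfig_interp eta c)
  | inr o => inr (soutcome_interp eta o)
  end.

Definition sdo (qa : Q * action S k) (s : sregs) (pos : nat) (l : letter S) :
    sconfig + soutcome :=
  let (q', a) := qa in
  match a with
  | AStore g _ i => inl (q', [ffun j => if j == i then omap inl (g l) else s j], pos)
  | ALeft => if pos is p.+1 then inl (q', s, p) else inr (SExit q' s DLeft)
  | ARight => if pos.+1 < size u then inl (q', s, pos.+1) else inr (SExit q' s DRight)
  | AAccept => inr SAccept
  | AReject => inr SLoop
  end.

Definition sclear (s : sregs) i j : sregs :=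
  [ffun m => if (m == i) || (m == j) then None else s m].

Definition scompare eta (s : sregs) i j : option bool :=
  match sregs_interp eta s i, sregs_interp eta s j with
  | Some a, Some b => Some (a == b)
  | _, _ => None
  end.

Definition sstep eta (c : sconfig) : sconfig + soutcome :=
  let: (q, s, pos) := c in
  let l := nth LEnd u pos in
  match quest q with
  | QLetter f _ => sdo (trans q (f l)) s pos l
  | QEq i j =>
      if scompare eta s i j is Some b then sdo (trans q b) (sclear s i j) pos l
      else inr SLoop
  end.

Definition snext eta (r : sconfig + soutcome) := if r is inl c then sstep eta c else r.
Definition siter eta n r := iter n (snext eta) r.

Lemma sdo_interp eta qa s pos l :
  do_action u qa (sregs_interp eta s) pos l = sresult_interp eta (sdo qa s pos l).
Proof.
case: qa => q' [g _ i| | | |] //=; last 2 first.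
- by case: pos.
- by case: ifP.
congr (inl (_, _, _)); apply/ffunP => t; rewrite !ffunE.
by case: eqP => // _; case: (g l).
Qed.

Lemma sregs_interp_clear eta s i j :
  sregs_interp eta (sclear s i j) =
  [ffun m => if (m == i) || (m == j) then None else sregs_interp eta s m].
Proof. by apply/ffunP => m; rewrite !ffunE; case: ifP. Qed.

Lemma sstep_interp eta c : step u (sconfig_interp eta c) = sresult_interp eta (sstep eta c).
Proof.
case: c => [[q s] pos]; rewrite /step /sstep /scompare /=.
case: (quest q) => [f _|i j]; first exact: sdo_interp.
case: (sregs_interp eta s i) => [a|] //; case: (sregs_interp eta s j) => [b|] //.
by rewrite -sdo_interp sregs_interp_clear.
Qed.

Lemma siterD eta m n r : siter eta (m + n) r = siter eta m (siter eta n r).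
Proof. exact: iterD. Qed.

Lemma siterS eta n r : siter eta n.+1 r = snext eta (siter eta n r).
Proof. by []. Qed.

Lemma siter_out eta n o : siter eta n (inr o) = inr o.
Proof. exact: iter_fix. Qed.

Lemma run_interp eta n c :
  run u n (sconfig_interp eta c) =
  if siter eta n (inl c) is inr o then Some (soutcome_interp eta o) else None.
Proof.
elim: n c => [//|n IH] c; rewrite /siter iterSr -/(siter _ _ _) /= sstep_interp.
by case: (sstep eta c) => [c'|o] //=; rewrite siter_out.
Qed.

Lemma siter_out_unique eta r n n' o o' :
  siter eta n r = inr o -> siter eta n' r = inr o' -> o = o'.
Proof.
wlog le_nn' : n n' o o' / n <= n' => [W Hn Hn'|].
  by case: (leqP n n') => [/W|/ltnW/W W']; [apply | symmetry; apply: W'].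
by move=> Hn; rewrite -(subnK le_nn') siterD Hn siter_out => -[].
Qed.

Definition is_initial (x : option svalue) : bool := if x is Some (inr _) then true else false.

Lemma sdo_initial qa s pos l q' s' pos' t :
  sdo qa s pos l = inl (q', s', pos') -> is_initial (s' t) -> is_initial (s t).
Proof.
case: qa => q0 [g _ i| | | |] //=.
- by case=> _ <- _; rewrite ffunE; case: eqP => // _; case: (g l).
- by case: pos => // p [_ <- _].
- by case: ifP => // _ [_ <- _].
Qed.

Lemma sstep_initial eta c c' t :
  sstep eta c = inl c' -> is_initial (c'.1.2 t) -> is_initial (c.1.2 t).
Proof.
case: c c' => [[q s] pos] [[q' s'] pos'] /=.
case: (quest q) => [f _|i j]; first exact: sdo_initial.
case: (scompare eta s i j) => // b /sdo_initial init /init.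
by rewrite ffunE; case: ifP.
Qed.

Lemma siter_initial eta r m n c c' t :
  siter eta n r = inl c -> siter eta (m + n) r = inl c' ->
  is_initial (c'.1.2 t) -> is_initial (c.1.2 t).
Proof.
move=> Hn; elim: m c' => [|m IH] c'; first by rewrite Hn => -[->].
rewrite addSn siterS; case: (siter eta (m + n) r) IH => [c''|o] IH //=.
by move=> /sstep_initial init /init; apply: IH.
Qed.

(* The comparison performed by a symbolic configuration depends on the valuation
   only if it reads an initial register value; [query] returns the register
   holding it and, if the other operand is a constant, that constant. *)
Definition squery (s : sregs) i j : option ('I_k * option atom) :=
  match s i, s j with
  | Some (inr _), Some (inl a) => Some (i, Some a)
  | Some (inr _), Some (inr _) => Some (i, None)
  | Some (inl a), Some (inr _) => Some (j, Some a)
  | _, _ => None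
  end.

Definition query (c : sconfig) : option ('I_k * option atom) :=
  let: (q, s, _) := c in if quest q is QEq i j then squery s i j else None.

Definition compare eta (c : sconfig) : option bool :=
  let: (q, s, _) := c in if quest q is QEq i j then scompare eta s i j else None.

Lemma sstep_compare eta eta' c : compare eta c = compare eta' c -> sstep eta c = sstep eta' c.
Proof. by case: c => [[q s] pos] /=; case: (quest q) => // i j ->. Qed.

Lemma query_initial c i0 oa : query c = Some (i0, oa) -> is_initial (c.1.2 i0).
Proof.
case: c => [[q s] pos] /=; case: (quest q) => // i j; rewrite /squery.
by case Ei: (s i) => [[a|t]|] //; case Ej: (s j) => [[b|t']|] // [<-]; rewrite ?Ei ?Ej.
Qed.

Lemma sstep_query_consumed eta c c' i0 oa :
  query c = Some (i0, oa) -> sstep eta c = inl c' -> ~~ is_initial (c'.1.2 i0).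
Proof.
case: c c' => [[q s] pos] [[q' s'] pos'] /=; case: (quest q) => // i j.
have i0ij : squery s i j = Some (i0, oa) -> (i0 == i) || (i0 == j).
  rewrite /squery; case: (s i) => [[a|t]|]; case: (s j) => [[b|t']|] // [<- _];
    by rewrite eqxx ?orbT.
move=> /i0ij used; case: (scompare eta s i j) => // b /sdo_initial init.
by apply/negP => /init; rewrite ffunE used.
Qed.

Lemma query_once eta r n n' c c' i0 oa oa' :
  siter eta n r = inl c -> siter eta n' r = inl c' ->
  query c = Some (i0, oa) -> query c' = Some (i0, oa') -> n = n'.
Proof.
wlog le_nn' : n n' c c' oa oa' / n <= n' => [W Hn Hn' Qc Qc'|].
  case: (leqP n n') => [le|/ltnW le]; first exact: W le Hn Hn' Qc Qc'.
  by symmetry; apply: W le Hn' Hn Qc' Qc.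
move=> Hn Hn' Qc Qc'; case: (ltngtP n n') le_nn' => // lt_nn' _.
move: Hn'; rewrite -(subnK lt_nn') siterD siterS Hn /=.
case E: (sstep eta c) => [c1|o]; last by rewrite siter_out.
have Hn1 : siter eta n.+1 r = inl c1 by rewrite siterS Hn.
rewrite -Hn1 -siterD => Hn'.
by case/negP: (sstep_query_consumed Qc E); apply: siter_initial Hn1 Hn' (query_initial Qc').
Qed.

Definition defined (eta : regs k) : {ffun 'I_k -> bool} := [ffun t => eta t != None].

Lemma compare_unqueried eta eta' c : query c = None -> compare eta c = compare eta' c.
Proof.
case: c => [[q s] pos] /=; case: (quest q) => // i j; rewrite /squery /scompare !ffunE.
case: (s i) => [[a|t]|]; case: (s j) => [[b|t']|] //= _.
by case: (eta t); case: (eta' t).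
Qed.

Lemma compare_defined eta eta' c :
  defined eta = defined eta' -> isSome (compare eta c) = isSome (compare eta' c).
Proof.
move=> /ffunP def.
have defE s t : isSome (sregs_interp eta s t) = isSome (sregs_interp eta' s t).
  rewrite !ffunE; case: (s t) => [[a|t']|] //=.
  by move: (def t'); rewrite !ffunE; case: (eta t'); case: (eta' t').
have cmpE e s i j :
    isSome (scompare e s i j) = isSome (sregs_interp e s i) && isSome (sregs_interp e s j).
  by rewrite /scompare; case: (sregs_interp e s i); case: (sregs_interp e s j).
case: c => [[q s] pos] /=; case: (quest q) => // i j.
by rewrite !cmpE !defE.
Qed.

Lemma compare_fixed (pi : aut) eta c :
  (forall i0 a, query c = Some (i0, Some a) -> pi a = a) ->
  compare (regs_act (aut_inv pi) eta) c = compare eta c.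
Proof.
have eq_inv a v : pi a = a -> (a == aut_inv pi v) = (a == v).
  move=> fix_a; apply/eqP/eqP => [E|<-]; first by rewrite -fix_a E aut_invK.
  by rewrite -{2}fix_a aut_funK.
case: c => [[q s] pos] /=; case: (quest q) => // i j; rewrite /squery /scompare !ffunE.
case: (s i) => [[a|t]|]; case: (s j) => [[b|t']|] //= fixed; rewrite !ffunE.
- by case: (eta t') => //= v; rewrite eq_inv // (fixed j).
- by case: (eta t) => //= v; rewrite eq_sym eq_inv 1?eq_sym // (fixed i).
- case: (eta t) => //= v; case: (eta t') => //= v'.
  by rewrite (inj_eq (can_inj (aut_invK pi))).
- by case: (eta t).
Qed.

(* By [query_once] each register is queried at most once along a run, so
   [answers] records every comparison whose result depends on the valuation. *)
Definition answers r eta : {ffun 'I_k -> bool} :=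
  [ffun i0 => classic_bool (exists n c oa,
     [/\ siter eta n r = inl c, query c = Some (i0, oa) & compare eta c = Some true])].

Lemma answersE r eta n c i0 oa :
  siter eta n r = inl c -> query c = Some (i0, oa) ->
  answers r eta i0 = (compare eta c == Some true).
Proof.
move=> Hn Qc; rewrite ffunE; apply/classic_boolP/eqP => [[n' [c' [oa' [Hn' Qc' cmp]]]]|cmp].
  by have eq_n := query_once Hn Hn' Qc Qc'; subst n'; move: Hn'; rewrite Hn => -[->].
by exists n, c, oa.
Qed.

Lemma siter_signature r eta eta' :
  defined eta = defined eta' -> answers r eta = answers r eta' ->
  forall n, siter eta n r = siter eta' n r.
Proof.
move=> def ans; elim=> // n IH; rewrite !siterS IH.
case Hn: (siter eta' n r) => [c|o] //=; apply: sstep_compare.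
case Qc: (query c) => [[i0 oa]|]; last exact: compare_unqueried.
have := answersE (etrans IH Hn) Qc; rewrite ans (answersE Hn Qc).
have := compare_defined c def.
by case: (compare eta c) => [[]|]; case: (compare eta' c) => [[]|].
Qed.

Definition mentions (T : nat -> sconfig + soutcome) (e : 'I_k + 'I_k) (a : atom) : Prop :=
  match e with
  | inl i0 => exists n c, T n = inl c /\ query c = Some (i0, Some a)
  | inr t => exists n q s d, T n = inr (SExit q s d) /\ s t = Some (inl a)
  end.

Lemma mentions_unique r eta eta' e a b :
  defined eta = defined eta' -> answers r eta = answers r eta' ->
  mentions (siter eta ^~ r) e a -> mentions (siter eta' ^~ r) e b -> a = b.
Proof.
move=> def ans; have sameT := siter_signature def ans; case: e => [i0|t] /=.
  move=> [n [c [Hn Qc]]] [n' [c' [Hn' Qc']]]; rewrite -sameT in Hn'.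
  have eq_n := query_once Hn Hn' Qc Qc'; subst n'.
  by move: Hn' Qc'; rewrite Hn => -[<-]; rewrite Qc => -[].
move=> [n [q [s [d [Hn Hs]]]]] [n' [q' [s' [d' [Hn' Hs']]]]]; rewrite -sameT in Hn'.
by case: (siter_out_unique Hn Hn') => _ eq_s _; move: Hs'; rewrite -eq_s Hs => -[].
Qed.

Lemma siter_fixed (pi : aut) eta r :
  (forall i0 a, mentions (siter eta ^~ r) (inl i0) a -> pi a = a) ->
  forall n, siter (regs_act (aut_inv pi) eta) n r = siter eta n r.
Proof.
move=> fixed; elim=> // n IH; rewrite !siterS IH.
case Hn: (siter eta n r) => [c|o] //=; apply/sstep_compare/compare_fixed => i0 a Qc.
by apply: (fixed i0); exists n, c.
Qed.

Lemma soutcome_interp_fixed (pi : aut) eta o :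
  (forall q s d t a, o = SExit q s d -> s t = Some (inl a) -> pi a = a) ->
  out_act pi (soutcome_interp (regs_act (aut_inv pi) eta) o) = soutcome_interp eta o.
Proof.
case: o => //= q s d fixed; congr OExit; apply/ffunP => t; rewrite !ffunE.
case Es: (s t) => [[a|t']|] //=; first by rewrite (fixed q s d t a).
by rewrite ffunE; case: (eta t') => //= v; rewrite aut_invK.
Qed.

Definition sstart q (from_left : bool) : sconfig + soutcome :=
  inl (q, [ffun t => Some (inr t)], if from_left then 0 else (size u).-1).

(* The symbolic run from [sstart q b] under a valuation is determined by the
   signature (q, b, defined eta, answers _ eta); so is every atom it mentions. *)
Definition signature : finType :=
  (Q * bool * {ffun 'I_k -> bool} * {ffun 'I_k -> bool} * ('I_k + 'I_k))%type.

Definition signature_atom (x : signature) : atom :=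
  let: (q, b, df, ans, e) := x in
  epsilon (inhabits 0) (fun a => exists eta,
    [/\ defined eta = df, answers (sstart q b) eta = ans
       & mentions (siter eta ^~ (sstart q b)) e a]).

Definition support_atoms : seq atom := map signature_atom (enum signature).

Lemma size_support_atoms : size support_atoms = #|signature|.
Proof. by rewrite size_map cardE. Qed.

Lemma mem_support_atoms eta q b e a :
  mentions (siter eta ^~ (sstart q b)) e a -> a \in support_atoms.
Proof.
move=> Ma; apply/mapP; exists (q, b, defined eta, answers (sstart q b) eta, e).
  by rewrite mem_enum.
symmetry; apply: epsilon_unique; first by exists eta.
move=> a1 a2 [eta1 [D1 A1 M1]] [eta2 [D2 A2 M2]].
by apply: mentions_unique M1 M2; rewrite ?D1 ?D2 ?A1 ?A2.
Qed.

Definition enters_left (d : dir) : bool := if d is DLeft then true else false.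

Lemma run_from_siter n q eta d : u <> [::] ->
  run_from u n (q, eta, d) =
  if siter eta n (sstart q (enters_left d)) is inr o then Some (soutcome_interp eta o) else None.
Proof.
have init : sregs_interp eta [ffun t => Some (inr t)] = eta by apply/ffunP => t; rewrite !ffunE.
rewrite /run_from /sstart -run_interp /= init; case Hu: u => [//|l u'] _.
by rewrite -Hu; case: d.
Qed.

Lemma regs_act_invK (pi : aut) (eta : regs k) : regs_act pi (regs_act (aut_inv pi) eta) = eta.
Proof. by apply/ffunP => t; rewrite !ffunE; case: (eta t) => //= v; rewrite aut_invK. Qed.

Lemma profile_supported : supports support_atoms (@profile S M u).
Proof.
move=> pi fixed [[q eta] d] /=; apply: profile_run_from_map => // n.
have [u_nil|u_cons] : u = [::] \/ u <> [::] by case: (u); [left|right].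
  by rewrite /run_from u_nil /= regs_act_invK.
rewrite !run_from_siter // siter_fixed => [|i0 a Ma]; last exact/fixed/mem_support_atoms/Ma.
case Hn: (siter eta n _) => [c|o] //=; congr Some.
apply: soutcome_interp_fixed => q' s d' t a Eo Es.
apply/fixed/(@mem_support_atoms eta q (enters_left d) (inr t)).
by exists n, q', s, d'; rewrite Hn Eo.
Qed.

End Profile.

Theorem mainTheorem2 (S : pof) (M : automaton S) :
  exists N : nat, forall u : seq (letter S),
    exists abar : seq atom, size abar <= N /\ supports abar (@profile S M u).
Proof.
exists #|signature M| => u; exists (support_atoms M u).
by rewrite size_support_atoms; split=> //; apply: profile_supported.
Qed.
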